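(* For every positive integer $n$ and every partition $\alpha\in\mathcal{P}(n)$ there exist unique integers $q>0$ and $s_1,\dots,s_q\ge0$ such that \[\delta(\alpha)=\big(1,2,\dots,q-1,q,q^{(s_q)},(q-1)^{(s_{q-1})},\dots,1^{(s_1)}\big),\] and these satisfy $\frac{q(q+1)}{2}+\sum_{k=1}^q k\,s_k=n$.
   Context: A partition of a positive integer $n$ is a finite non-increasing sequence $\alpha=(\alpha_1,\dots,\alpha_l)$ of positive integers with sum $n$; $\mathcal{P}(n)$ is the set of partitions of $n$, and $\alpha_i=0$ for $i>l$. The diagonal sequence is $\delta(\alpha)=(d_k)_{k\ge1}$ with $d_k=|\{i:1\le i\le k,\ \alpha_i+i-1\ge k\}|$, trailing zeros omitted. The notation $j^{(s)}$ denotes $s$ consecutive entries equal to $j$. *)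

From mathcomp Require Import all_boot.
Set Implicit Arguments. Unset Strict Implicit. Unset Printing Implicit Defensive.

(* A partition of n: a finite non-increasing sequence of positive integers
   with sum n.  alpha_i (1-based) is [nth 0 alpha (i-1)], which is 0 for i > l. *)
Definition is_partition (n : nat) (alpha : seq nat) : Prop :=
  [/\ sorted geq alpha, all (fun x => 0 < x) alpha & sumn alpha = n].

(* d_k = #{ i : 1 <= i <= k, alpha_i + i - 1 >= k }; with 0-based j = i-1,
   the condition reads  k <= alpha_(j+1) + j. *)
Definition diag_entry (alpha : seq nat) (k : nat) : nat :=
  count (fun j => k <= nth 0 alpha j + j) (iota 0 k).

Definition rtrim (s : seq nat) : seq nat :=
  rev (drop (find (fun x => x != 0) (rev s)) (rev s)).

(* The diagonal sequence (d_k)_{k>=1} with trailing zeros omitted.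
   d_k = 0 for all k >= sumn alpha + size alpha (any index i with
   alpha_i + i - 1 >= k must satisfy i <= size alpha), so listing
   d_1, ..., d_(sumn alpha + size alpha) and trimming gives exactly the
   nonzero part. *)
Definition delta (alpha : seq nat) : seq nat :=
  rtrim [seq diag_entry alpha k | k <- iota 1 (sumn alpha + size alpha)].

(* The sequence (1,2,...,q, q^(s_q), (q-1)^(s_(q-1)), ..., 1^(s_1)),
   where s_k = nth 0 s (k-1). *)
Definition diag_shape (q : nat) (s : seq nat) : seq nat :=
  iota 1 q ++ flatten [seq nseq (nth 0 s k.-1) k | k <- rev (iota 1 q)].

(* Write r_j = alpha_(j+1) + j, so that d_k = #{j < k | k <= r_j}.  Since alpha
   is non-increasing, r_(j+1) <= r_j + 1, and
     d_(k+1) = d_k + [k < l] - #{j < k | r_j = k}.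
   Let q be the first k such that k >= l or k = r_j for some j < k.  By the
   discrete intermediate value property of r, this condition persists for all
   k >= q.  Hence d_k = k for k <= q and d is non-increasing after q, so delta
   is 1, ..., q followed by a non-increasing sequence with values in [1, q]; the
   multiplicities of its values are the s_k, and both q and the s_k are read
   back from the sequence.  Finally sum_k d_k counts the pairs j < k <= r_j,
   that is sum_j alpha_j = n. *)

From mathcomp Require Import all_boot zify.

Lemma geq_trans : transitive geq.
Proof. by move=> b a c /= ba cb; apply: leq_trans cb ba. Qed.

Lemma anti_geq : antisymmetric geq.
Proof. by move=> m n; rewrite andbC => /anti_leq. Qed.

Lemma nth_sorted_geqS (s : seq nat) j : sorted geq s -> nth 0 s j.+1 <= nth 0 s j.
Proof.
elim: s j => [|x s IHs] [|j] //= s_sorted; have := path_sorted s_sorted.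
- by case: s s_sorted {IHs} => [|y s] //= /andP[].
- exact: IHs.
Qed.

Lemma discrete_ivt (f : nat -> nat) i m v : (forall j, f j.+1 <= (f j).+1) ->
  i <= m -> f i <= v <= f m -> exists2 j, i <= j <= m & f j = v.
Proof.
move=> fS; elim: m => [|m IHm] im /andP[fiv vfm].
  by move: im fiv; rewrite leqn0 => /eqP-> f0v; exists 0 => //; lia.
have [fmv|/eqP fmv] := eqVneq (f m.+1) v; first by exists m.+1; rewrite ?im ?leqnn.
have im' : i <= m by case: ltngtP im fiv vfm => // ->; lia.
have [|j ijm fjv] := IHm im'; first by have := fS m; lia.
by exists j; first lia.
Qed.

Lemma sorted_geq_nseq_cat c x (t : seq nat) :
  all (fun y => y <= x) t -> sorted geq t -> sorted geq (nseq c x ++ t).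
Proof.
move=> t_le t_sorted; elim: c => //= c IHc.
rewrite (path_sortedE geq_trans) IHc andbT all_cat.
by apply/andP; split; [apply/allP => y /nseqP[-> _] /= | exact: t_le].
Qed.

Definition blocks (g : nat -> nat) (q : nat) : seq nat :=
  flatten [seq nseq (g k) k | k <- rev (iota 1 q)].

Lemma blocksS g q : blocks g q.+1 = nseq (g q.+1) q.+1 ++ blocks g q.
Proof. by rewrite /blocks -[q.+1]addn1 iotaD rev_cat /= add1n addn1. Qed.

Lemma eq_in_blocks g1 g2 q : {in [pred k | 0 < k <= q], g1 =1 g2} ->
  blocks g1 q = blocks g2 q.
Proof.
move=> g12; congr flatten; apply/eq_in_map => k.
by rewrite mem_rev mem_iota => kq; rewrite g12 //= inE; lia.
Qed.

Lemma mem_blocks g q x : x \in blocks g q -> 0 < x <= q.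
Proof.
elim: q => [|q IHq] //; rewrite blocksS mem_cat => /orP[/nseqP[-> _] | /IHq]; lia.
Qed.

Lemma count_mem_blocks g q k :
  count_mem k (blocks g q) = if 0 < k <= q then g k else 0.
Proof.
elim: q => [|q IHq]; first by case: ifP => //; lia.
rewrite blocksS count_cat count_nseq IHq /=.
by case: eqP => [<-|qk]; do 2 case: ifP => //=; lia.
Qed.

Lemma sorted_blocks g q : sorted geq (blocks g q).
Proof.
elim: q => // q IHq; rewrite blocksS sorted_geq_nseq_cat //.
by apply/allP => x /mem_blocks; lia.
Qed.

Lemma blocks_count_mem q (t : seq nat) : sorted geq t ->
  all (fun x => 0 < x <= q) t -> blocks (fun k => count_mem k t) q = t.
Proof.
move=> t_sorted t_range.
apply: (sorted_eq geq_trans anti_geq) => //; first exact: sorted_blocks.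
apply/allP => x _; rewrite /= count_mem_blocks; case: ifP => // /negbT x_out.
by rewrite eq_sym; apply/eqP/count_memPn; apply: contra x_out => /(allP t_range).
Qed.

Lemma sumn_blocks g q : sumn (blocks g q) = \sum_(1 <= k < q.+1) k * g k.
Proof.
elim: q => [|q IHq]; first by rewrite big_geq.
by rewrite blocksS sumn_cat sumn_nseq IHq [in RHS]big_nat_recr //= addnC mulnC.
Qed.

Lemma diag_shapeE q s :
  diag_shape q s = iota 1 q ++ blocks (fun k => nth 0 s k.-1) q.
Proof. by []. Qed.

Lemma sumn_iota1 q : sumn (iota 1 q) = q * q.+1 %/ 2.
Proof.
have := bin2_sum q.+1; rewrite bin2 -divn2 mulnC /= => <-.
by rewrite sumnE /index_iota subn0 big_cons add0n.
Qed.

Lemma sumn_diag_shape q s : sumn (diag_shape q s) =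
  q * q.+1 %/ 2 + \sum_(1 <= k < q.+1) k * nth 0 s k.-1.
Proof. by rewrite diag_shapeE sumn_cat sumn_iota1 sumn_blocks. Qed.

Lemma nth_diag_shape_size q s : nth 0 (diag_shape q s) q <= q.
Proof.
rewrite diag_shapeE nth_cat size_iota ltnn subnn.
have := @mem_blocks (fun k => nth 0 s k.-1) q.
by case: (blocks _ q) => [|x b] //= /(_ x (mem_head x b)) /andP[].
Qed.

Lemma nth_diag_shape_lt q s i : i < q -> nth 0 (diag_shape q s) i = i.+1.
Proof. by move=> iq; rewrite diag_shapeE nth_cat size_iota iq nth_iota. Qed.

Lemma diag_shape_inj q s q' s' : size s = q -> size s' = q' ->
  diag_shape q s = diag_shape q' s' -> q' = q /\ s' = s.
Proof.
move=> s_size s'_size shape_eq.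
have q'q : q' = q.
  case: (ltngtP q q') => // [qq' | q'q].
    by have := nth_diag_shape_size q s; rewrite shape_eq nth_diag_shape_lt //; lia.
  by have := nth_diag_shape_size q' s'; rewrite -shape_eq nth_diag_shape_lt //; lia.
rewrite {}q'q in s'_size shape_eq *; split=> //.
have := congr1 (drop q) shape_eq; rewrite !diag_shapeE !drop_size_cat ?size_iota //.
move=> blocks_eq; apply: (@eq_from_nth _ 0) => [|i]; first by rewrite s_size s'_size.
rewrite s'_size => iq.
have := congr1 (count_mem i.+1) blocks_eq; rewrite !count_mem_blocks.
by rewrite ltn0Sn iq.
Qed.

Lemma sumn_rtrim s : sumn (rtrim s) = sumn s.
Proof.
rewrite /rtrim sumn_rev -[in RHS]sumn_rev.
set r := rev s; set i := find _ r.
rewrite -[in RHS](cat_take_drop i r) sumn_cat.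
suff /eqP -> : sumn (take i r) == 0 by [].
rewrite sumnE sum_nat_seq_eq0; apply/(all_nthP 0) => j.
rewrite size_take_min leq_min => /andP[ji _] /=.
by rewrite nth_take //; move: (before_find 0 ji) => /negbFE.
Qed.

Lemma rtrim_cat_nseq0 u z : all (fun x => 0 < x) u -> rtrim (u ++ nseq z 0) = u.
Proof.
move=> u_pos; rewrite /rtrim rev_cat rev_nseq find_cat has_nseq andbF size_nseq.
suff -> : find (fun x => x != 0) (rev u) = 0.
  by rewrite addn0 drop_size_cat ?size_nseq //; apply: revK.
have := u_pos; rewrite -all_rev; case: (rev u) => [|x r] //=.
by case/andP => /lt0n_neq0 ->.
Qed.

Lemma sorted_geq_zeros_last t :
  sorted geq t -> t = [seq x <- t | 0 < x] ++ nseq (count_mem 0 t) 0.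
Proof.
elim: t => //= x t IHt t_path; have t_sorted := path_sorted t_path.
case: (posnP x) => [x0 | x_pos] /=; last by rewrite add0n -IHt.
have t0 : all (pred1 0) t.
  apply/allP => y; move: t_path; rewrite x0 (path_sortedE geq_trans).
  by case/andP => /allP t_le _ /t_le /=; rewrite leqn0.
by rewrite x0 (all_pred1P _ _ t0) filter_nseq count_nseq /= mul1n.
Qed.

Lemma rtrim_cat_sorted u t : all (fun x => 0 < x) u -> sorted geq t ->
  rtrim (u ++ t) = u ++ [seq x <- t | 0 < x].
Proof.
move=> u_pos /sorted_geq_zeros_last {1}->; rewrite catA rtrim_cat_nseq0 //.
by rewrite all_cat u_pos all_filter; apply/allP => x _ /=; apply/implyP.
Qed.

Lemma diag_shape_counts q t : sorted geq t -> all (fun x => x <= q) t ->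
  iota 1 q ++ [seq x <- t | 0 < x] =
  diag_shape q [seq count_mem k t | k <- iota 1 q].
Proof.
move=> t_sorted t_le; rewrite diag_shapeE; congr (_ ++ _).
rewrite -[LHS](@blocks_count_mem q).
- apply: eq_in_blocks => k; rewrite inE => /andP[k_pos kq].
  rewrite (nth_map 0) ?size_iota ?nth_iota; try lia.
  rewrite add1n prednK // count_filter; apply: eq_count => x /=.
  by case: eqP => // ->.
- by apply: sorted_filter => //; exact: geq_trans.
- by apply/allP => x; rewrite mem_filter => /andP[-> /(allP t_le)].
Qed.

Lemma count_iota_sum (a : pred nat) k N : k <= N ->
  count a (iota 0 k) = \sum_(0 <= j < N) ((j < k) && a j).
Proof.
move=> kN; rewrite -sumn_count sumnE big_map (big_cat_nat _ (n := k)) //=.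
rewrite [X in _ = _ + X]big_nat_cond [X in _ = _ + X]big1 ?addn0; last first.
  by move=> j /andP[/andP[kj _] _]; rewrite ltnNge kj.
rewrite /index_iota subn0; apply: eq_big_seq => j.
by rewrite mem_iota add0n => /andP[_ ->].
Qed.

Lemma sum_range_indicator j m N :
  \sum_(0 <= k < N.+1) ((j < k) && (k <= m)) = minn N m - j.
Proof.
elim: N => [|N IHN]; first by rewrite big_nat1 /=; lia.
rewrite big_nat_recr //= IHN.
by case: (ltnP j N.+1); case: (leqP N.+1 m) => /=; lia.
Qed.

Lemma nth_le_sumn (s : seq nat) j : nth 0 s j <= sumn s.
Proof.
elim: s j => [|x s IHs] [|j] //=; first exact: leq_addr.
exact: leq_trans (IHs j) (leq_addl _ _).
Qed.

Lemma sum_nth_sumn (s : seq nat) N : size s <= N ->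
  \sum_(0 <= j < N) nth 0 s j = sumn s.
Proof.
elim: s N => [|x s IHs] N sN; first by apply: big1_seq => j _; rewrite nth_nil.
by case: N sN => // N sN; rewrite big_nat_recl //= IHs.
Qed.

Section DiagonalSequence.

Variable alpha : seq nat.

Local Notation d := (diag_entry alpha).
Local Notation N := (sumn alpha + size alpha).

Definition reach j := nth 0 alpha j + j.

Lemma reach_bounded j : j <= N -> reach j <= N.
Proof.
move=> jN; rewrite /reach; case: (ltnP j (size alpha)) => js.
  by apply: leq_add; [exact: nth_le_sumn | exact: ltnW].
by rewrite nth_default //; lia.
Qed.

Lemma sumn_diag_entries : sumn [seq d k | k <- iota 1 N] = sumn alpha.
Proof.
rewrite sumnE big_map (_ : iota 1 N = index_iota 1 N.+1); last first.
  by rewrite /index_iota subn1.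
have -> : \sum_(1 <= k < N.+1) d k = \sum_(0 <= k < N.+1) d k.
  by rewrite [RHS]big_ltn.
pose pairs k := \sum_(0 <= j < N.+1) ((j < k) && (k <= reach j)).
rewrite (eq_big_nat _ _ (F2 := pairs)); last first.
  by move=> k /andP[_ kN]; rewrite /diag_entry (@count_iota_sum _ _ N.+1 (ltnW kN)).
rewrite /pairs exchange_big_nat -[in RHS](@sum_nth_sumn alpha N.+1); last lia.
apply: eq_big_nat => j /andP[_ jN]; rewrite sum_range_indicator.
by have := @reach_bounded j jN; rewrite /reach; lia.
Qed.

Lemma sumn_delta : sumn (delta alpha) = sumn alpha.
Proof. by rewrite sumn_rtrim sumn_diag_entries. Qed.

Hypothesis alpha_sorted : sorted geq alpha.
Hypothesis alpha_pos : all (fun x => 0 < x) alpha.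

Lemma reachS j : reach j.+1 <= (reach j).+1.
Proof. by rewrite /reach addnS ltnS leq_add2r nth_sorted_geqS. Qed.

Lemma ltn_reach j : (j < reach j) = (j < size alpha).
Proof.
rewrite /reach -{1}[j]add0n ltn_add2r.
case: (ltnP j (size alpha)) => js; last by rewrite nth_default.
by apply: (allP alpha_pos); apply: mem_nth.
Qed.

Lemma diag_entryS k :
  d k.+1 + count (fun j => reach j == k) (iota 0 k) = d k + (k < size alpha).
Proof.
rewrite /diag_entry -/(reach _) -[k.+1]addn1 iotaD count_cat /= add0n addn0 addn1.
rewrite ltn_reach addnAC; congr (_ + _); rewrite -count_predUI.
rewrite [X in _ + X](eq_count (a2 := pred0)) ?count_pred0 ?addn0; last first.
  by move=> j /=; case: ltngtP.
by apply: eq_count => j /=; rewrite [k <= _]leq_eqVlt eq_sym orbC.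
Qed.

Definition stalled k := (size alpha <= k) || has (fun j => reach j == k) (iota 0 k).

Lemma diag_entryS_unstalled k : ~~ stalled k -> d k.+1 = (d k).+1.
Proof.
rewrite negb_or -ltnNge has_count -leqNgt leqn0 => /andP[ks /eqP no_hit].
by have := diag_entryS k; rewrite no_hit ks !addn0 addn1.
Qed.

Lemma diag_entryS_stalled k : stalled k -> d k.+1 <= d k.
Proof.
rewrite /stalled has_count => /orP[sk | hit]; have := diag_entryS k.
  by rewrite ltnNge sk /=; lia.
by case: (k < size alpha) => /=; lia.
Qed.

Lemma stalledS k : stalled k -> stalled k.+1.
Proof.
case/orP => [sk | /hasP[j]]; first by rewrite /stalled (leq_trans sk).
rewrite mem_iota add0n => /andP[_ jk] /eqP reach_j.
case: (leqP (size alpha) k.+1) => [Sks | Sks]; first by rewrite /stalled Sks.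
have [|i /andP[ji ik] reach_i] := @discrete_ivt reach j k k.+1 reachS (ltnW jk).
  by rewrite reach_j leqnSn /= ltn_reach ltnW.
by apply/orP; right; apply/hasP; exists i; rewrite ?mem_iota ?reach_i //=; lia.
Qed.

Lemma exists_stalled : exists k, stalled k.
Proof. by exists (size alpha); rewrite /stalled leqnn. Qed.

Definition peak := ex_minn exists_stalled.

Lemma peak_stalled k : peak <= k -> stalled k.
Proof.
rewrite /peak; case: ex_minnP => q stalled_q _.
elim: k => [|k IHk]; first by rewrite leqn0 => /eqP <-.
by rewrite leq_eqVlt => /predU1P[<- | /IHk /stalledS].
Qed.

Lemma diag_entry_id k : k <= peak -> d k = k.
Proof.
rewrite /peak; case: ex_minnP => q _ q_min.
elim: k => [|k IHk] // Skq; rewrite diag_entryS_unstalled ?IHk ?(ltnW Skq) //.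
by apply/negP => /q_min; lia.
Qed.

Lemma peak_gt0 : 0 < size alpha -> 0 < peak.
Proof.
rewrite /peak; case: ex_minnP => q stalled_q _; rewrite !lt0n.
by apply: contra => /eqP q0; move: stalled_q; rewrite q0 /stalled /= orbF leqn0.
Qed.

Lemma peak_le_size : peak <= size alpha.
Proof. by rewrite /peak; case: ex_minnP => q _; apply; rewrite /stalled leqnn. Qed.

Lemma diag_entry_antimono :
  {in [pred k | peak <= k] &, {homo d : k l / k <= l >-> l <= k}}.
Proof.
apply: homo_leq_in => [k | l k m lk ml | i j | k]; rewrite ?inE.
- exact: leqnn.
- exact: leq_trans ml lk.
- by move=> pi _ k /andP[ik _]; rewrite inE (leq_trans pi (ltnW ik)).
- by move=> pk _; apply/diag_entryS_stalled/peak_stalled.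
Qed.

Definition diag_tail := [seq d k | k <- iota peak.+1 (N - peak)].

Lemma diag_entries_split : [seq d k | k <- iota 1 N] = iota 1 peak ++ diag_tail.
Proof.
have peak_N : peak <= N by rewrite (leq_trans peak_le_size) ?leq_addl.
rewrite -[in LHS](subnKC peak_N) iotaD map_cat add1n; congr (_ ++ _).
by apply: map_id_in => k; rewrite mem_iota => /andP[_ kp]; apply: diag_entry_id; lia.
Qed.

Lemma sorted_diag_tail : sorted geq diag_tail.
Proof.
apply: (homo_sorted_in diag_entry_antimono); last exact: iota_sorted.
by apply/allP => k; rewrite mem_iota inE => /andP[pk _]; apply: ltnW.
Qed.

Lemma diag_tail_le_peak : all (fun x => x <= peak) diag_tail.
Proof.
apply/allP => x /mapP[k]; rewrite mem_iota => /andP[pk _] ->.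
by rewrite -[X in _ <= X](@diag_entry_id peak) // diag_entry_antimono ?inE // ltnW.
Qed.

Lemma delta_diag_shape :
  delta alpha = diag_shape peak [seq count_mem k diag_tail | k <- iota 1 peak].
Proof.
rewrite /delta diag_entries_split rtrim_cat_sorted ?sorted_diag_tail //.
  by rewrite diag_shape_counts ?sorted_diag_tail ?diag_tail_le_peak.
by apply/allP => x; rewrite mem_iota; lia.
Qed.

End DiagonalSequence.

Theorem corollary2p2 (n : nat) (alpha : seq nat) :
  0 < n -> is_partition n alpha ->
  exists q : nat, exists s : seq nat,
    [/\ 0 < q, size s = q, delta alpha = diag_shape q s,
        forall (q' : nat) (s' : seq nat),
          0 < q' -> size s' = q' -> delta alpha = diag_shape q' s' ->
          q' = q /\ s' = s
      & q * q.+1 %/ 2 + \sum_(1 <= k < q.+1) k * nth 0 s k.-1 = n].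
Proof.
move=> n_gt0 [alpha_sorted alpha_pos alpha_sum]; subst n.
have alpha_nonempty : 0 < size alpha by move: n_gt0; case: (alpha).
set s := [seq count_mem k (diag_tail alpha) | k <- iota 1 (peak alpha)].
have s_size : size s = peak alpha by rewrite size_map size_iota.
have shape : delta alpha = diag_shape (peak alpha) s.
  exact: delta_diag_shape alpha_sorted alpha_pos.
exists (peak alpha), s; split=> //; first exact: peak_gt0.
  by move=> q' s' _ s'_size; rewrite shape; apply: diag_shape_inj.
by rewrite -sumn_diag_shape -shape sumn_delta.
Qed.
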